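(* Let $k\ge 2$ and let $\lambda$ be an integer partition of length $k$ whose parts are not all equal. Then $|\lambda^{\perp B}|$ is at most the sum of the four largest of the binomial coefficients $\binom{k-2}{0},\binom{k-2}{1},\dots,\binom{k-2}{k-2}$ (the sum of all of them if there are fewer than four). Consequently: (a) if $k\ge 2$ is even, then $|(1^k)^{\perp B}|>|\mu^{\perp B}|$ for every partition $\mu$ of length $k$ whose parts are not all equal; (b) if $k\ge 5$ is odd, then $|(2,1^{k-1})^{\perp B}|\ge|\mu^{\perp B}|$ for every partition $\mu$ of length $k$.
   Context: An integer partition is $\lambda=(\lambda_1,\dots,\lambda_k)$ with integers $\lambda_1\ge\dots\ge\lambda_k\ge 1$; $k$ is its length. $1^k$ denotes the partition with $k$ parts equal to $1$, and $(2,1^{k-1})$ the partition with one part $2$ and $k-1$ parts $1$. For a partition $\lambda$, $\lambda^{\perp B}=\{x\in\{-1,1\}^k:\lambda_1x_1+\dots+\lambda_kx_k=0\}$. *)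

From HB Require Import structures.
From mathcomp Require Import all_boot all_order all_algebra.
Set Implicit Arguments. Unset Strict Implicit. Unset Printing Implicit Defensive.
Import Order.TTheory GRing.Theory Num.Theory.

Definition is_partition (l : seq nat) : bool :=
  sorted geq l && all (fun x => 0 < x) l.

Definition sgnb (b : bool) : int := if b then 1%R else (-1)%R.

(* lambda^{perp B} = { x in {-1,1}^k : sum_i l_i x_i = 0 }, with x encoded
   as a boolean finite function on 'I_k (k = size l) via sgnb. *)
Definition perpB (l : seq nat) : {set {ffun 'I_(size l) -> bool}} :=
  [set x : {ffun 'I_(size l) -> bool} |
     (\sum_(i < size l) ((nth 0%N l i)%:Z * sgnb (x i)))%R == 0%R].

Definition top4_binom_sum (n : nat) : nat :=
  \sum_(c <- take 4 (sort geq [seq 'C(n, j) | j <- iota 0 n.+1])) c.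

From HB Require Import structures.
From mathcomp Require Import all_boot all_order all_algebra zify.
Set Implicit Arguments. Unset Strict Implicit. Unset Printing Implicit Defensive.
Import Order.TTheory GRing.Theory Num.Theory.

(* Let N(w, t) ([signed_count]) be the number of sign vectors x
   with sum_i w_i x_i = t, so that |l^{perp B}| = N(l, 0).  For w = 1^n this
   counts +-1 walks of length n ending at t ([walk]): binomial coefficients
   on positions of the parity of n, unimodal around 0.  Let [window s n] be
   the number of such walks ending in the 2s central positions -(s-1)..s.
   1. Erdos' Littlewood-Offord argument ([erdos_bound]): for positive
      weights w and s distinct targets, the counts sum to at most
      window s |w|; the induction step rests on Pascal's rule and the
      concavity of windows.
   2. If l is not constant, its largest part a exceeds its smallest part b;
      fixing their two signs leaves the k - 2 middle parts with the four
      distinct targets +-a +-b, so N(l, 0) <= window 4 (k - 2)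
      ([nonconstant_partition_bound]).
   3. window 4 n is a sum of four consecutive binomials 'C(n, j), hence at
      most the four largest ones ([window4_le_top4]); this is the bound.
   4. For (a), window 4 (2m) < N(1^(2m+2), 0) by strict unimodality; for (b),
      window 4 (2m+1) = N((2, 1^(2m+2)), 0), and constant partitions of odd
      length have no balanced signing at all. *)

Fixpoint signed_count (w : seq nat) (t : int) : nat :=
  match w with
  | [::] => (t == 0%R) : nat
  | a :: w' => signed_count w' (t - a%:Z)%R + signed_count w' (t + a%:Z)%R
  end.

Definition ffun_cons n (b : bool) (y : {ffun 'I_n -> bool}) : {ffun 'I_n.+1 -> bool} :=
  [ffun i => if unlift ord0 i is Some j then y j else b].

Definition ffun_uncons n (x : {ffun 'I_n.+1 -> bool}) : bool * {ffun 'I_n -> bool} :=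
  (x ord0, [ffun j => x (lift ord0 j)]).

Lemma ffun_consK n :
  cancel (fun p : bool * {ffun 'I_n -> bool} => ffun_cons p.1 p.2) (@ffun_uncons n).
Proof.
case=> b y; rewrite /ffun_uncons /ffun_cons /= ffunE unlift_none; congr (_, _).
by apply/ffunP=> j; rewrite !ffunE liftK.
Qed.

Lemma ffun_unconsK n :
  cancel (@ffun_uncons n) (fun p : bool * {ffun 'I_n -> bool} => ffun_cons p.1 p.2).
Proof.
move=> x; apply/ffunP=> i; rewrite /ffun_uncons /ffun_cons /= ffunE.
by case: unliftP => [j ->|->]; rewrite ?ffunE.
Qed.

Lemma signed_sum_cons a w b (y : {ffun 'I_(size w) -> bool}) :
  (\sum_(i < size (a :: w)) (nth 0%N (a :: w) i)%:Z * sgnb (ffun_cons b y i) =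
   a%:Z * sgnb b + \sum_(i < size w) (nth 0%N w i)%:Z * sgnb (y i))%R.
Proof.
rewrite big_ord_recl /ffun_cons ffunE unlift_none /=; congr (_ + _)%R.
by apply: eq_bigr => i _; rewrite ffunE liftK.
Qed.

Lemma card_level_set w t :
  #|[set x : {ffun 'I_(size w) -> bool} |
     (\sum_(i < size w) ((nth 0%N w i)%:Z * sgnb (x i)))%R == t]| = signed_count w t.
Proof.
elim: w t => [|a w IH] t.
  rewrite /= -sum1dep_card; under eq_bigl => x do rewrite big_ord0 eq_sym.
  case: (t == 0%R) => /=; last by rewrite big_pred0.
  by rewrite sum1_card card_ffun card_ord.
rewrite -sum1dep_card big_mkcond /=.
rewrite (reindex (fun p : bool * {ffun 'I_(size w) -> bool} => ffun_cons p.1 p.2)) /=;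
  last by exists (@ffun_uncons _) => x _; [apply: ffun_consK | apply: ffun_unconsK].
rewrite -(pair_bigA _ (fun b y => if (\sum_(i < (size w).+1)
  (nth 0%N (a :: w) i)%:Z * sgnb (ffun_cons b y i))%R == t then 1 else 0)%N).
rewrite big_bool /= -!IH -!sum1dep_card.
rewrite [X in (_ = X + _)%N]big_mkcond [X in (_ = _ + X)%N]big_mkcond.
by congr (_ + _)%N; apply: eq_bigr => y _; rewrite signed_sum_cons /sgnb;
  congr (if _ then _ else _); apply/eqP/eqP; lia.
Qed.

Corollary card_perpB l : #|perpB l| = signed_count l 0.
Proof. exact: card_level_set. Qed.

Lemma signed_count_rcons w b t :
  signed_count (rcons w b) t =
  signed_count w (t - b%:Z)%R + signed_count w (t + b%:Z)%R.
Proof.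
elim: w t => [|a w IH] t //=; rewrite !IH addnACA.
by congr (signed_count _ _ + signed_count _ _ + (signed_count _ _ + signed_count _ _));
  lia.
Qed.

(* Flipping all signs shows that the counts are symmetric in the target. *)
Lemma signed_count_opp w t : signed_count w (- t)%R = signed_count w t.
Proof.
elim: w t => [|a w IH] t /=; first by rewrite oppr_eq0.
have -> : (- t - a%:Z = - (t + a%:Z))%R by lia.
have -> : (- t + a%:Z = - (t - a%:Z))%R by lia.
by rewrite !IH addnC.
Qed.

Lemma signed_count_scale n m u :
  0 < m -> signed_count (nseq n m) (m%:Z * u)%R = signed_count (nseq n 1) u.
Proof.
move=> m_gt0; elim: n u => [|n IH] u /=.
  by congr nat_of_bool; apply/eqP/eqP; nia.
rewrite -!IH; congr (signed_count _ _ + signed_count _ _); lia.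
Qed.

Definition walk n v := signed_count (nseq n 1) v.

Lemma walkS n v : walk n.+1 v = walk n (v - 1)%R + walk n (v + 1)%R.
Proof. by []. Qed.

Lemma walk_opp n v : walk n (- v)%R = walk n v.
Proof. exact: signed_count_opp. Qed.

Lemma walk_out n v : (n%:Z < v)%R -> walk n v = 0.
Proof.
elim: n v => [|n IH] v v_gt; first by rewrite /walk /=; case: eqP => //; lia.
by rewrite walkS !IH //; lia.
Qed.

(* A walk changes parity at every step. *)
Lemma walk_parity n u : walk n (n%:Z - 2 * u + 1)%R = 0.
Proof.
elim: n u => [|n IH] u; first by rewrite /walk /=; case: eqP => //; lia.
rewrite walkS.
have -> : ((n.+1)%:Z - 2 * u + 1 - 1 = n%:Z - 2 * u + 1)%R by lia.
have -> : ((n.+1)%:Z - 2 * u + 1 + 1 = n%:Z - 2 * (u - 1) + 1)%R by lia.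
by rewrite !IH.
Qed.

Lemma walk_binom n j : walk n (n%:Z - (2 * j)%:Z)%R = 'C(n, j).
Proof.
elim: n j => [|n IH] [|j] //.
- have out : walk n ((n.+1)%:Z - (2 * 0)%:Z + 1)%R = 0 by apply: walk_out; lia.
  rewrite walkS out addn0.
  have -> : ((n.+1)%:Z - (2 * 0)%:Z - 1 = n%:Z - (2 * 0)%:Z)%R by lia.
  by rewrite IH !bin0.
- by rewrite walkS binS -!IH; congr (walk _ _ + walk _ _); lia.
Qed.

Lemma walk_step2 n v : (0 <= v)%R -> walk n (v + 2)%R <= walk n v.
Proof.
elim: n v => [|n IH] v v_ge0; first by rewrite /walk /=; case: eqP => //; lia.
rewrite !walkS [X in _ <= X]addnC.
have -> : (v + 2 - 1 = v + 1)%R by lia.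
rewrite leq_add2l (_ : (v + 2 + 1 = v + 1 + 2)%R); last by lia.
have [v_gt0 | v_le0] := ltP 0%R v.
- apply: leq_trans (IH _ _) _; first by lia.
  by rewrite (_ : (v + 1 = v - 1 + 2)%R); [apply: IH | ]; lia.
- have -> : v = 0%R by lia.
  by rewrite add0r -(walk_opp n (-1)) opprK; apply: IH.
Qed.

(* [window s n] is the total number of walks of length n ending in the
   2s central positions -(s-1), ..., s, added pairwise as -i and i+1. *)
Definition window_pair n (i : nat) := walk n (- i%:Z)%R + walk n (i%:Z + 1)%R.

Definition window s n := \sum_(i < s) window_pair n i.

Lemma window0 n : window 0 n = 0.
Proof. by rewrite /window big_ord0. Qed.

Lemma windowS s n : window s.+1 n = window s n + window_pair n s.
Proof. by rewrite /window big_ord_recr. Qed.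

Lemma window_mono n s s' : s <= s' -> window s n <= window s' n.
Proof.
move=> /subnK <-; elim: (s' - s) => [|k IH] //.
by rewrite addSn windowS (leq_trans IH) ?leq_addr.
Qed.

Lemma window_pair_anti n i j : i <= j -> window_pair n j <= window_pair n i.
Proof.
move=> /subnK <-; elim: (j - i) => [|k IH] //; apply: leq_trans IH.
rewrite addSn /window_pair !walk_opp addnC.
have -> : ((k + i).+1%:Z = (k + i)%:Z + 1)%R by lia.
have -> : ((k + i)%:Z + 1 + 1 = (k + i)%:Z + 2)%R by lia.
by rewrite leq_add2r walk_step2.
Qed.

Lemma window_exchange n x y j : y <= x -> j <= y ->
  window (x + j) n + window (y - j) n <= window x n + window y n.
Proof.
move=> y_le_x; elim: j => [|j IH] j_lt; first by rewrite addn0 subn0.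
apply: leq_trans (IH (ltnW j_lt)).
rewrite (_ : y - j = (y - j.+1).+1); last by lia.
rewrite addnS !windowS -addnA leq_add2l addnC leq_add2l.
by apply: window_pair_anti; lia.
Qed.

(* Pascal's rule for windows: a walk of length n.+1 ends in the window of
   size s.+1 iff its first n steps end in the window of size s.+2 or s. *)
Lemma window_pascal n s : window s.+1 n.+1 = window s.+2 n + window s n.
Proof.
elim: s => [|s IH].
  rewrite !windowS !window0 /window_pair !walkS.
  have -> : (- 0%:Z - 1 = - 1%:Z)%R by lia.
  have -> : (0%:Z + 1 - 1 = - 0%:Z)%R by lia.
  have -> : (- 0%:Z + 1 = 0%:Z + 1)%R by lia.
  have -> : (0%:Z + 1 + 1 = 1%:Z + 1)%R by lia.
  lia.
rewrite windowS IH [window s.+3 n]windowS [window s.+1 n]windowS /window_pair !walkS.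
have -> : (- (s.+1)%:Z - 1 = - (s.+2)%:Z)%R by lia.
have -> : (- (s.+1)%:Z + 1 = - s%:Z)%R by lia.
have -> : ((s.+1)%:Z + 1 - 1 = s%:Z + 1)%R by lia.
have -> : ((s.+1)%:Z + 1 + 1 = (s.+2)%:Z + 1)%R by lia.
lia.
Qed.

(* For a > 0, the translate T + a of a nonempty finite set of integers is
   not contained in T - a: otherwise both would have the same sum. *)
Lemma shifted_copies_differ (T : seq int) (a : int) : (0 < a)%R -> uniq T ->
  T != [::] -> count (mem [seq (t - a)%R | t <- T]) [seq (t + a)%R | t <- T] < size T.
Proof.
move=> a_gt0 T_uniq T_nil; set U := map _ T; set V := map _ T.
have U_uniq : uniq U by rewrite map_inj_uniq //; exact: addIr.
have V_uniq : uniq V by rewrite map_inj_uniq //; exact: addIr.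
rewrite -(size_map (fun t => t + a)%R) ltn_neqAle count_size andbT -all_count.
apply/negP => /allP VU.
have size_UV : size U <= size V by rewrite !size_map.
have [_ /(uniq_perm V_uniq U_uniq) VU_perm] := uniq_min_size V_uniq VU size_UV.
have /eqP := (perm_big _ VU_perm : \sum_(v <- V) v = \sum_(u <- U) u)%R.
rewrite !big_map -subr_eq0 -sumrB.
rewrite (eq_bigr (fun=> a + a)%R); last by move=> t _; lia.
rewrite psumr_eq0 => [/allP all0|t _]; last by rewrite addr_ge0 // ltW.
have /hasP[t0 t0_in _] : has predT T by rewrite has_predT lt0n size_eq0.
by have := all0 t0 t0_in; rewrite /= paddr_eq0 ?ltW // (gt_eqF a_gt0).
Qed.

Lemma sum_indicator_uniq (T : seq int) :
  uniq T -> \sum_(t <- T) ((t == 0%R) : nat) <= 1.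
Proof.
move=> T_uniq; suff -> : \sum_(t <- T) ((t == 0%R) : nat) = count_mem 0%R T.
  by rewrite count_uniq_mem ?leq_b1.
by elim: T {T_uniq} => [|t T IH]; rewrite ?big_nil ?big_cons //= IH.
Qed.

(* Induction on w: the tail must hit T - a or T + a;
   regroup these into their union (2s - q targets) and their intersection
   (q targets), where q < s by shifted_copies_differ; Pascal's rule and the
   concavity of windows conclude. *)
Lemma erdos_bound w (T : seq int) : all (fun x => 0 < x) w -> uniq T ->
  \sum_(t <- T) signed_count w t <= window (size T) (size w).
Proof.
elim: w T => [|a w IH] [|t0 T'] w_pos T_uniq; rewrite ?big_nil //.
  apply: leq_trans (sum_indicator_uniq T_uniq) _.
  by apply: leq_trans (window_mono 0 (ltn0Sn (size T'))); rewrite /window big_ord1.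
case/andP: w_pos => a_gt0 w_pos; set T := t0 :: T' in T_uniq *.
set U := [seq (t - a%:Z)%R | t <- T]; set V := [seq (t + a%:Z)%R | t <- T].
set q := count (mem U) V.
have q_lt : q < size T by apply: shifted_copies_differ; rewrite ?ltz_nat.
have -> : \sum_(t <- T) signed_count (a :: w) t =
    \sum_(u <- U ++ [seq v <- V | v \notin U]) signed_count w u +
    \sum_(v <- [seq v <- V | v \in U]) signed_count w v.
  have -> : \sum_(t <- T) signed_count (a :: w) t =
      \sum_(u <- U) signed_count w u + \sum_(v <- V) signed_count w v.
    by rewrite big_split !big_map.
  by rewrite big_cat -addnA; congr (_ + _); rewrite !big_filter (bigID (mem U)) addnC.
have U_uniq : uniq U by rewrite map_inj_uniq //; exact: addIr.
have V_uniq : uniq V by rewrite map_inj_uniq //; exact: addIr.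
have UV_uniq : uniq (U ++ [seq v <- V | v \notin U]).
  rewrite cat_uniq U_uniq filter_uniq // andbT.
  by apply/hasPn => v; rewrite mem_filter => /andP[].
apply: leq_trans (leq_add (IH _ w_pos UV_uniq) (IH _ w_pos (filter_uniq _ V_uniq))) _.
rewrite size_cat !size_filter size_map -/q -/T.
have -> : count (predC (mem U)) V = size T - q.
  by rewrite -(size_map (fun t => t + a%:Z)%R T) -(count_predC (mem U) V) addKn.
change (size (a :: w)) with (size w).+1.
move: q_lt; case: (size T) => [|s] // q_lt.
rewrite window_pascal (_ : s.+1 + (s.+1 - q) = s.+2 + (s - q)); last by lia.
by rewrite -{2}(subKn (ltnSE q_lt)); apply: window_exchange; lia.
Qed.

Lemma sum_take_succ a (x : seq nat) m : all (fun y => y <= a) x ->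
  \sum_(c <- take m.+1 x) c <= a + \sum_(c <- take m x) c.
Proof.
elim: x m => [|b x IH] m; first by rewrite !big_nil.
case/andP => b_le x_le; case: m => [|m] /=.
  by rewrite take0 big_seq1 big_nil addn0.
by rewrite !big_cons addnCA leq_add2l IH.
Qed.

Lemma sorted_subseq_sum (x y : seq nat) s : sorted geq x -> subseq y x ->
  size y <= s -> \sum_(c <- y) c <= \sum_(c <- take s x) c.
Proof.
move=> + /subseqP[m _ ->] {y}; elim: x m s => [|a x IH] m s x_sorted.
  by rewrite mask0 big_nil.
have x'_sorted := path_sorted x_sorted.
case: m => [|[] m]; rewrite ?mask0 ?big_nil //= => size_le.
- case: s size_le => [|s] //; rewrite ltnS /= !big_cons leq_add2l.
  exact: IH.
- case: s size_le => [|s] size_le; first by rewrite leqn0 size_eq0 in size_le;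
    rewrite (eqP size_le) big_nil.
  apply: leq_trans (IH m s.+1 x'_sorted size_le) _; rewrite /= big_cons.
  exact/sum_take_succ/(order_path_min (rev_trans leq_trans) x_sorted).
Qed.

Lemma subseq_sum_le_top (x y : seq nat) s : subseq y x -> size y <= s ->
  \sum_(c <- y) c <= \sum_(c <- take s (sort geq x)) c.
Proof.
have geq_total : total geq by move=> u v; apply: leq_total.
move=> y_sub y_size; rewrite -(perm_big _ (_ : perm_eq (sort geq y) y)) ?perm_sort //.
apply: sorted_subseq_sum; rewrite ?size_sort ?sort_sorted //.
exact: subseq_sort geq_total (rev_trans leq_trans) _ _ y_sub.
Qed.

Lemma consecutive_binom_le_top4 n m : m + 4 <= n.+1 ->
  \sum_(j <- iota m 4) 'C(n, j) <= top4_binom_sum n.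
Proof.
move=> m_le; rewrite -(big_map (fun j => 'C(n, j)) xpredT id).
apply: subseq_sum_le_top; rewrite ?size_map ?size_iota //; apply: map_subseq.
rewrite (_ : iota m 4 = take 4 (drop m (iota 0 n.+1))).
  exact: subseq_trans (take_subseq _ _) (drop_subseq _ _).
by rewrite drop_iota take_iota add0n (_ : minn 4 (n.+1 - m) = 4) //; lia.
Qed.

Lemma walk_parity_at n v u : v = (n%:Z - 2 * u + 1)%R -> walk n v = 0.
Proof. by move=> ->; apply: walk_parity. Qed.

Lemma walk_binom_at n v j : v = (n%:Z - (2 * j)%:Z)%R -> walk n v = 'C(n, j).
Proof. by move=> ->; apply: walk_binom. Qed.

Lemma window4E n : window 4 n =
  walk n 0%:Z + walk n 1%:Z + walk n (- 1%:Z) + walk n 2%:Z +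
  walk n (- 2%:Z) + walk n 3%:Z + walk n (- 3%:Z) + walk n 4%:Z.
Proof. by rewrite /window !big_ord_recr big_ord0 /= !addnA. Qed.

Lemma window4_even m :
  window 4 (2 * m) = walk (2 * m) 0%:Z + 2 * walk (2 * m) 2%:Z + walk (2 * m) 4%:Z.
Proof.
rewrite window4E !walk_opp.
have -> : walk (2 * m) 1%:Z = 0 by apply: (walk_parity_at (u := m%:Z)); lia.
have -> : walk (2 * m) 3%:Z = 0 by apply: (walk_parity_at (u := m%:Z - 1)); lia.
lia.
Qed.

Lemma window4_odd m :
  window 4 (2 * m).+1 = 2 * (walk (2 * m).+1 1%:Z + walk (2 * m).+1 3%:Z).
Proof.
rewrite window4E !walk_opp; set n := (2 * m).+1.
have -> : walk n 0%:Z = 0 by apply: (walk_parity_at (u := m%:Z + 1)); lia.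
have -> : walk n 2%:Z = 0 by apply: (walk_parity_at (u := m%:Z)); lia.
have -> : walk n 4%:Z = 0 by apply: (walk_parity_at (u := m%:Z - 1)); lia.
lia.
Qed.

Lemma window4_binom_even m :
  window 4 (2 * m.+2) = \sum_(j <- iota m 4) 'C(2 * m.+2, j).
Proof.
rewrite window4_even /= !big_cons big_nil; set n := 2 * m.+2.
have -> : 'C(n, m) = walk n 4%:Z by apply/esym/walk_binom_at; lia.
have -> : 'C(n, m.+1) = walk n 2%:Z by apply/esym/walk_binom_at; lia.
have -> : 'C(n, m.+2) = walk n 0%:Z by apply/esym/walk_binom_at; lia.
have -> : 'C(n, m.+3) = walk n 2%:Z by rewrite -walk_opp; apply/esym/walk_binom_at; lia.
lia.
Qed.

Lemma window4_binom_odd m :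
  window 4 (2 * m.+1).+1 = \sum_(j <- iota m 4) 'C((2 * m.+1).+1, j).
Proof.
rewrite window4_odd /= !big_cons big_nil; set n := (2 * m.+1).+1.
have -> : 'C(n, m) = walk n 3%:Z by apply/esym/walk_binom_at; lia.
have -> : 'C(n, m.+1) = walk n 1%:Z by apply/esym/walk_binom_at; lia.
have -> : 'C(n, m.+2) = walk n 1%:Z by rewrite -walk_opp; apply/esym/walk_binom_at; lia.
have -> : 'C(n, m.+3) = walk n 3%:Z by rewrite -walk_opp; apply/esym/walk_binom_at; lia.
lia.
Qed.

Lemma double_half_odd n : n = 2 * n./2 + odd n.
Proof. by rewrite -{1}(odd_double_half n) -mul2n addnC. Qed.

Lemma window4_le_top4 n : window 4 n <= top4_binom_sum n.
Proof.
have [n_small | n_ge3] := ltnP n 3.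
  by case: n n_small => [|[|[|]]] // _; rewrite window4E /top4_binom_sum unlock; vm_compute.
move: (n./2) (odd n) (double_half_odd n) n_ge3 => m [] -> n_ge3.
- case: m n_ge3 => [|m] // _; rewrite addn1 window4_binom_odd.
  by apply: consecutive_binom_le_top4; lia.
- case: m n_ge3 => [|[|m]] // _; rewrite addn0 window4_binom_even.
  by apply: consecutive_binom_le_top4; lia.
Qed.

Lemma walkSS n v :
  walk n.+2 v = walk n (v - 2%:Z)%R + 2 * walk n v + walk n (v + 2%:Z)%R.
Proof.
rewrite !walkS subrK addrK.
have -> : (v - 1 - 1 = v - 2%:Z)%R by lia.
have -> : (v + 1 + 1 = v + 2%:Z)%R by lia.
lia.
Qed.

Lemma walk_even_centre m :
  walk (2 * m).+2 0%:Z = 2 * walk (2 * m) 0%:Z + 2 * walk (2 * m) 2%:Z.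
Proof. by rewrite walkSS sub0r add0r walk_opp; lia. Qed.

Lemma walk_even_next m : walk (2 * m).+2 2%:Z =
  walk (2 * m) 0%:Z + 2 * walk (2 * m) 2%:Z + walk (2 * m) 4%:Z.
Proof. by rewrite walkSS. Qed.

Lemma walk_4_le_2 n : walk n 4%:Z <= walk n 2%:Z.
Proof. exact: walk_step2. Qed.

Lemma walk_centre_gt m : walk (2 * m) 2%:Z < walk (2 * m) 0%:Z.
Proof.
elim: m => [|m IH] //; rewrite (_ : 2 * m.+1 = (2 * m).+2) ?mulnS //.
rewrite walk_even_centre walk_even_next.
by have := walk_4_le_2 (2 * m); lia.
Qed.

Lemma window4_lt_ones m : window 4 (2 * m) < walk (2 * m).+2 0%:Z.
Proof.
rewrite window4_even walk_even_centre.
by have := walk_4_le_2 (2 * m); have := walk_centre_gt m; lia.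
Qed.

Lemma window4_eq_two_ones m :
  window 4 (2 * m).+1 = signed_count (2 :: nseq (2 * m).+2 1) 0.
Proof.
have -> : signed_count (2 :: nseq (2 * m).+2 1) 0 =
    walk (2 * m).+2 (- 2%:Z) + walk (2 * m).+2 2%:Z by [].
by rewrite window4_odd walk_opp addnn -mul2n [walk (2 * m).+2 _]walkS.
Qed.

(* A constant partition of odd length has no balanced signing: after
   dividing by the common part, an odd walk never returns to 0. *)
Lemma constant_partition_odd mu : is_partition mu -> odd (size mu) ->
  constant mu -> signed_count mu 0 = 0.
Proof.
case/andP=> _ mu_pos mu_odd /(constantP 0)[x mu_eq].
have x_gt0 : 0 < x.
  by move/allP: mu_pos; apply; rewrite {1}mu_eq mem_nseq eqxx andbT odd_gt0.
have := signed_count_scale (size mu) 0 x_gt0; rewrite mulr0 -mu_eq => ->.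
set k := size mu in mu_odd *; rewrite [k]double_half_odd mu_odd addn1.
by apply: (walk_parity_at (n := (2 * k./2).+1) (v := 0%R) (u := (k./2)%:Z + 1)%R); lia.
Qed.

Lemma sorted_geq_ends_lt a m b :
  sorted geq (a :: rcons m b) -> ~~ constant (a :: rcons m b) -> b < a.
Proof.
move=> l_sorted; apply: contraR; rewrite -leqNgt => a_le_b.
have /allP le_a := order_path_min (rev_trans leq_trans) l_sorted.
have : sorted leq (rev (a :: rcons m b)) by rewrite rev_sorted.
rewrite rev_cons rev_rcons rcons_cons => /(order_path_min leq_trans) /allP ge_b.
apply/allP => x x_in; rewrite /= eqn_leq le_a //= (leq_trans a_le_b) //.
move: x_in; rewrite mem_rcons inE => /predU1P[-> //|x_m].
by rewrite ge_b // mem_rcons inE mem_rev x_m orbT.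
Qed.

(* Branching on the signs of its
   largest part a and smallest part b < a leaves the middle parts with the
   four distinct targets +-a +-b, to which erdos_bound applies. *)
Lemma nonconstant_partition_bound l : is_partition l -> 2 <= size l ->
  ~~ constant l -> signed_count l 0 <= window 4 (size l - 2).
Proof.
case: l => [|a l] //; case/lastP: l => [|m b] // /andP[l_sorted l_pos] _ l_nonconst.
have b_lt_a := sorted_geq_ends_lt l_sorted l_nonconst.
set T := [:: - a%:Z - b%:Z; - a%:Z + b%:Z; a%:Z - b%:Z; a%:Z + b%:Z]%R.
have -> : signed_count (a :: rcons m b) 0 = \sum_(t <- T) signed_count m t.
  by rewrite /= !signed_count_rcons !big_cons big_nil !sub0r !add0r addn0 !addnA.
move: l_pos; rewrite /= all_rcons => /and3P[_ b_gt0 m_pos].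
have T_uniq : uniq T by rewrite /= !inE; lia.
by rewrite size_rcons subn2 /=; apply: erdos_bound.
Qed.

Lemma even_ge2P k : 2 <= k -> ~~ odd k -> exists m, k = (2 * m).+2.
Proof.
move=> k_ge2 /negbTE k_even; exists k./2.-1.
by have := double_half_odd k; rewrite k_even; lia.
Qed.

Lemma odd_ge3P k : 3 <= k -> odd k -> exists m, k = (2 * m).+3.
Proof.
move=> k_ge3 k_odd; exists k./2.-1.
by have := double_half_odd k; rewrite k_odd; lia.
Qed.

Theorem mainTheorem6 :
  (forall (k : nat) (l : seq nat),
      2 <= k -> is_partition l -> size l = k -> ~~ constant l ->
      #|perpB l| <= top4_binom_sum (k - 2))
  /\
  (forall (k : nat) (mu : seq nat),
      2 <= k -> ~~ odd k -> is_partition mu -> size mu = k -> ~~ constant mu ->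
      #|perpB mu| < #|perpB (nseq k 1)|)
  /\
  (forall (k : nat) (mu : seq nat),
      5 <= k -> odd k -> is_partition mu -> size mu = k ->
      #|perpB mu| <= #|perpB (2 :: nseq (k - 1) 1)|).
Proof.
split; [|split].
- move=> k l k_ge2 l_part l_size l_nonconst; rewrite card_perpB -l_size.
  apply: leq_trans (window4_le_top4 _).
  by apply: nonconstant_partition_bound; rewrite ?l_size.
- move=> k mu k_ge2 k_even; have [m ->] := even_ge2P k_ge2 k_even.
  move=> mu_part mu_size mu_nonconst; rewrite !card_perpB.
  apply: leq_ltn_trans (nonconstant_partition_bound mu_part _ mu_nonconst) _;
    rewrite mu_size // !subSS subn0.
  exact: window4_lt_ones.
- move=> k mu k_ge5 k_odd; have [m ->] := odd_ge3P (ltnW (ltnW k_ge5)) k_odd.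
  move=> mu_part mu_size; rewrite !card_perpB.
  rewrite subSS subn0 -window4_eq_two_ones.
  case/boolP: (constant mu) => [mu_const | mu_nonconst].
    by rewrite constant_partition_odd // mu_size /= oddM.
  apply: leq_trans (nonconstant_partition_bound mu_part _ mu_nonconst) _;
    by rewrite mu_size // !subSS subn0.
Qed.
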